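(* Let $\mathbf v=(v_1,\dots,v_m)$ and $\mathbf k=(k_1,\dots,k_m)$ be $m$-tuples of positive integers with $\mathbf v\ge\mathbf k$, and let $\mathbf w=(w_1,\dots,w_n)$ and $\boldsymbol\ell=(\ell_1,\dots,\ell_n)$ be $n$-tuples of positive integers with $\mathbf w\ge\boldsymbol\ell$. Let $t$ be a positive integer. Suppose $\mathcal D_1$ is a ${\rm GC}(\mathbf v,\mathbf k,t)$ with $b$ blocks and $\mathcal D_2$ is a ${\rm GC}(\mathbf w,\boldsymbol\ell,t)$ with $c$ blocks. Then there exists a ${\rm GC}(\mathrm{cat}(\mathbf v,\mathbf w),\mathrm{cat}(\mathbf k,\boldsymbol\ell),t)$ with $bc$ blocks.
   Context: $\mathrm{cat}(\mathbf a,\mathbf b)$ denotes concatenation of tuples. For tuples $\mathbf a,\mathbf b$ of positive integers of the same length $p$ with $\mathbf b\le\mathbf a$ entrywise and $t\le\sum_i b_i$: let $Y_1,\dots,Y_p$ be pairwise disjoint sets with $|Y_i|=a_i$; a block is a $p$-tuple $(B_1,\dots,B_p)$ with $B_i\subseteq Y_i$, $|B_i|=b_i$; a $p$-tuple of sets $(T_1,\dots,T_p)$ is $(\mathbf a,\mathbf b,t)$-admissible if $T_i\subseteq Y_i$, $|T_i|\le b_i$ for all $i$ and $\sum|T_i|=t$, and is contained in a block if $T_i\subseteq B_i$ for all $i$. A generalized covering design ${\rm GC}(\mathbf a,\mathbf b,t)$ is a finite family (repetitions allowed) of blocks containing every admissible tuple in at least one block. *)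

From mathcomp Require Import all_boot.
Set Implicit Arguments. Unset Strict Implicit. Unset Printing Implicit Defensive.

(* The pairwise disjoint sets Y_i with |Y_i| = a_i are taken to be the
   ordinal types 'I_(a_i) indexed by i : 'I_p (disjointness is by tagging
   with the component index). *)
Definition settuple (a : seq nat) :=
  forall i : 'I_(size a), {set 'I_(nth 0 a i)}.

Definition is_block (a b : seq nat) (B : settuple a) : bool :=
  [forall i, #|B i| == nth 0 b i].

Definition admissible (a b : seq nat) (t : nat) (T : settuple a) : Prop :=
  (forall i, #|T i| <= nth 0 b i) /\ \sum_(i < size a) #|T i| = t.

Definition contained_in (a : seq nat) (T B : settuple a) : bool :=
  [forall i, T i \subset B i].

(* GC(a,b,t): a finite family (a seq, repetitions allowed) of blocks covering
   every admissible tuple; the standing conditions on the parameters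
   (positive integers, same length, b <= a entrywise, t <= sum b) are part
   of the definition. *)
Definition is_GC (a b : seq nat) (t : nat) (D : seq (settuple a)) : Prop :=
  [/\ [&& all (fun x => 0 < x) a, all (fun x => 0 < x) b, all2 leq b a
          & t <= sumn b],
      all (is_block b) D &
      forall T : settuple a, admissible b t T -> has (contained_in T) D].

From mathcomp Require Import all_boot.
Set Implicit Arguments. Unset Strict Implicit. Unset Printing Implicit Defensive.

(* Take all concatenations B1 ++ B2 of a block B1 of D1 with a block B2 of D2.
   An admissible tuple T for the concatenated parameters splits into a left part
   and a right part, each of total size at most t and within the block sizes.
   Since t is at most the total block size on each side, either part can be
   padded to an admissible tuple; these are covered by some B1 and some B2,
   and then T is contained in B1 ++ B2. *)

Lemma all2_nth (T U : Type) (r : T -> U -> bool) x0 y0 s t i :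
  all2 r s t -> i < size s -> r (nth x0 s i) (nth y0 t i).
Proof.
by elim: s t i => [|x s IHs] [|y t] [|i] //= /andP[rxy rst] //; apply: IHs.
Qed.

Lemma all2_cat (T U : Type) (r : T -> U -> bool) s1 s2 t1 t2 :
  size s1 = size t1 -> all2 r (s1 ++ s2) (t1 ++ t2) = all2 r s1 t1 && all2 r s2 t2.
Proof. by elim: s1 t1 => [|x s1 IHs] [|y t1] //= [/IHs ->]; rewrite andbA. Qed.

Lemma all_allpairs (S T R : Type) (p : pred R) (f : S -> T -> R) s t :
  all p [seq f x y | x <- s, y <- t] = all (fun x => all (fun y => p (f x y)) t) s.
Proof. by elim: s => //= x s IHs; rewrite all_cat all_map -IHs. Qed.

Lemma has_allpairs (S T R : Type) (p : pred R) (f : S -> T -> R) s t :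
  has p [seq f x y | x <- s, y <- t] = has (fun x => has (fun y => p (f x y)) t) s.
Proof. by elim: s => //= x s IHs; rewrite has_cat has_map -IHs. Qed.

Lemma sumn_nth (s : seq nat) : sumn s = \sum_(0 <= i < size s) nth 0 s i.
Proof. by rewrite sumnE (big_nth 0). Qed.

Lemma card_ord_set_cast (N M : nat) (P : pred nat) :
  N = M -> #|[set x : 'I_N | P x]| = #|[set x : 'I_M | P x]|.
Proof. by move->. Qed.

Section SettupleMembership.
Variable a : seq nat.
Implicit Types (S T B : settuple a) (P : nat -> pred nat).

(* A tuple of sets read as a relation between component indices and element
   values, both in nat: this sidesteps the casts between the dependent types
   'I_(nth 0 a i) when tuples are split and concatenated. *)
Definition settuple_mem S (n : nat) : pred nat :=
  fun m => [exists i : 'I_(size a), (val i == n) && [exists x in S i, val x == m]].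

Definition settuple_of P : settuple a := fun i => [set x : 'I_(nth 0 a i) | P i x].

Definition card_at S n := #|[set x : 'I_(nth 0 a n) | settuple_mem S n x]|.

Lemma settuple_memE S (i : 'I_(size a)) (x : 'I_(nth 0 a i)) :
  settuple_mem S i x = (x \in S i).
Proof.
apply/existsP/idP => [[j /andP[/eqP/val_inj ->]] | xS].
  by case/existsP=> y /andP[yS /eqP/val_inj <-].
by exists i; rewrite eqxx; apply/existsP; exists x; rewrite xS eqxx.
Qed.

Lemma settuple_mem_bound S n m :
  settuple_mem S n m -> (n < size a) && (m < nth 0 a n).
Proof.
by case/existsP=> i /andP[/eqP <- /existsP[x /andP[_ /eqP <-]]]; rewrite !ltn_ord.
Qed.

Lemma settuple_ofE P n m :
  settuple_mem (settuple_of P) n m = [&& n < size a, m < nth 0 a n & P n m].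
Proof.
apply/idP/and3P => [memPnm | [na ma Pnm]].
  case/existsP: (memPnm) => i /andP[/eqP <- /existsP[x /andP[]]].
  by rewrite inE => Pix /eqP <-; rewrite !ltn_ord.
apply/existsP; exists (Ordinal na); rewrite eqxx; apply/existsP.
by exists (Ordinal ma); rewrite inE Pnm eqxx.
Qed.

Lemma card_atE S (i : 'I_(size a)) : card_at S i = #|S i|.
Proof. by apply: eq_card => x; rewrite inE settuple_memE. Qed.

Lemma card_at_of P n :
  n < size a -> card_at (settuple_of P) n = #|[set x : 'I_(nth 0 a n) | P n x]|.
Proof. by move=> na; apply: eq_card => x; rewrite !inE settuple_ofE na ltn_ord. Qed.

Lemma sum_card_at S : \sum_(i < size a) #|S i| = \sum_(0 <= n < size a) card_at S n.
Proof. by rewrite big_mkord; apply: eq_bigr => i _; rewrite card_atE. Qed.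

Lemma forall_card_at (R : nat -> nat -> Prop) S :
  (forall i : 'I_(size a), R i #|S i|) <-> (forall n, n < size a -> R n (card_at S n)).
Proof.
split=> [RS n na | RS i]; last by rewrite -card_atE; apply: RS.
by rewrite -[n]/(val (Ordinal na)) card_atE; apply: RS.
Qed.

Lemma contained_inP T B :
  reflect (forall n m, settuple_mem T n m -> settuple_mem B n m) (contained_in T B).
Proof.
apply: (iffP forallP) => [TB n m | TB i].
  case/existsP=> i /andP[/eqP <- /existsP[x /andP[xT /eqP <-]]].
  by rewrite settuple_memE (subsetP (TB i)).
by apply/subsetP => x; rewrite -!settuple_memE; apply: TB.
Qed.

Lemma contained_in_trans T1 T2 T3 :
  contained_in T1 T2 -> contained_in T2 T3 -> contained_in T1 T3.
Proof.
by move=> /contained_inP T12 /contained_inP T23; apply/contained_inP => n m /T12/T23.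
Qed.

Lemma is_blockP b B :
  reflect (forall n, n < size a -> card_at B n = nth 0 b n) (is_block b B).
Proof.
apply: (iffP forallP) => [Bb | Bb i]; last by rewrite -card_atE Bb.
by apply/(forall_card_at (fun n c => c = nth 0 b n)) => i; apply/eqP.
Qed.

Lemma admissible_card_at b t T :
  admissible b t T ->
  (forall n, n < size a -> card_at T n <= nth 0 b n) /\
  \sum_(0 <= n < size a) card_at T n = t.
Proof.
case=> Tb sumT; split; last by rewrite -sum_card_at.
exact/(forall_card_at (fun n c => c <= nth 0 b n)).
Qed.

Definition subadmissible (b : seq nat) (t : nat) T : Prop :=
  (forall i, #|T i| <= nth 0 b i) /\ \sum_(i < size a) #|T i| <= t.

Lemma subadmissible_card_at b t T :
  (forall n, n < size a -> card_at T n <= nth 0 b n) ->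
  \sum_(0 <= n < size a) card_at T n <= t -> subadmissible b t T.
Proof.
move=> Tb sumT; split; last by rewrite sum_card_at.
exact/(forall_card_at (fun n c => c <= nth 0 b n)).
Qed.

Lemma settuple_grow T (i : 'I_(size a)) :
  #|T i| < nth 0 a i ->
  exists2 T', contained_in T T' & forall j, #|T' j| = #|T j| + (j == i).
Proof.
move=> Ti_small; have /set0Pn[x] : ~: T i != set0.
  by rewrite -card_gt0 -(leq_add2l #|T i|) cardsC card_ord addn1.
rewrite inE => xNT.
exists (settuple_of (fun n m => settuple_mem T n m || (n == i) && (m == x))).
  apply/contained_inP => n m Tnm; have /andP[na ma] := settuple_mem_bound Tnm.
  by rewrite settuple_ofE na ma Tnm.
move=> j; rewrite /settuple_of; case: (eqVneq j i) => [->|ji].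
  rewrite (_ : [set y | _] = x |: T i) ?cardsU1 ?xNT ?addn1 //.
  by apply/setP => y; rewrite !inE settuple_memE eqxx orbC.
rewrite addn0; apply: eq_card => y.
by rewrite !inE settuple_memE val_eqE (negbTE ji) orbF.
Qed.

Lemma subadmissible_extend b t T :
  size b = size a -> all2 leq b a -> t <= sumn b -> subadmissible b t T ->
  exists2 T', admissible b t T' & contained_in T T'.
Proof.
move=> sba ba tb [Tb /subnKC]; move: (t - _) => d.
elim: d T Tb => [|d IHd] T Tb sumT.
  by exists T; [split; rewrite -?sumT ?addn0 | apply/forallP => i; apply: subxx].
have [i Ti_lt] : exists i, #|T i| < nth 0 b i.
  apply/existsP; move: tb; rewrite -sumT; apply: contraTT => /existsPn Tge.
  rewrite -ltnNge addnS ltnS sumn_nth sba big_mkord (leq_trans _ (leq_addr _ _)) //.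
  by apply: leq_sum => j _; rewrite leqNgt Tge.
have Ti_small : #|T i| < nth 0 a i by rewrite (leq_trans Ti_lt) // all2_nth // sba.
have [T' TT' cardT'] := settuple_grow Ti_small.
have T'b : forall j, #|T' j| <= nth 0 b j.
  by move=> j; rewrite cardT'; case: eqVneq => [->|_]; rewrite ?addn1 ?addn0.
have sumT' : \sum_(j < size a) #|T' j| + d = t.
  have sum_eq_i : \sum_(j < size a) (j == i) = 1.
    by rewrite (bigD1 i) //= eqxx big1 // => j /negbTE ->.
  by rewrite (eq_bigr _ (fun j _ => cardT' j)) big_split /= sum_eq_i addn1 addSnnS.
have [T'' admT'' T'T''] := IHd T' T'b sumT'.
by exists T''; last exact: contained_in_trans TT' T'T''.
Qed.

End SettupleMembership.

Section Concatenation.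
Variables v w : seq nat.

Definition settuple_lsplit (T : settuple (v ++ w)) : settuple v :=
  settuple_of (settuple_mem T).

Definition settuple_rsplit (T : settuple (v ++ w)) : settuple w :=
  settuple_of (fun n => settuple_mem T (size v + n)).

Definition settuple_cat (B1 : settuple v) (B2 : settuple w) : settuple (v ++ w) :=
  settuple_of (fun n =>
    if n < size v then settuple_mem B1 n else settuple_mem B2 (n - size v)).

Lemma ltn_subn_size_cat n : n < size (v ++ w) -> ~~ (n < size v) -> n - size v < size w.
Proof. by rewrite size_cat -leqNgt => nvw vn; rewrite ltn_subLR. Qed.

Lemma card_at_lsplit T n : n < size v -> card_at (settuple_lsplit T) n = card_at T n.
Proof.
by move=> nv; rewrite card_at_of //; apply: card_ord_set_cast; rewrite nth_cat nv.
Qed.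

Lemma card_at_rsplit T n :
  n < size w -> card_at (settuple_rsplit T) n = card_at T (size v + n).
Proof.
move=> nw; rewrite card_at_of //; apply: card_ord_set_cast.
by rewrite nth_cat ltnNge leq_addr addKn.
Qed.

Lemma card_at_cat B1 B2 n : n < size (v ++ w) ->
  card_at (settuple_cat B1 B2) n =
  if n < size v then card_at B1 n else card_at B2 (n - size v).
Proof.
move=> nvw; rewrite card_at_of //.
by case: ifP => nv; apply: card_ord_set_cast; rewrite nth_cat nv.
Qed.

Lemma sum_card_at_split T :
  \sum_(0 <= n < size (v ++ w)) card_at T n =
  \sum_(0 <= n < size v) card_at (settuple_lsplit T) n +
  \sum_(0 <= n < size w) card_at (settuple_rsplit T) n.
Proof.
rewrite size_cat (@big_cat_nat _ _ _ (size v)) ?leq_addr //=; congr (_ + _).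
  by apply: eq_big_nat => n /andP[_ nv]; rewrite card_at_lsplit.
rewrite -{1}[size v]add0n big_addn addKn; apply: eq_big_nat => n /andP[_ nw].
by rewrite card_at_rsplit // addnC.
Qed.

Lemma subadmissible_lsplit (k l : seq nat) t T :
  size k = size v -> admissible (k ++ l) t T -> subadmissible k t (settuple_lsplit T).
Proof.
move=> skv /admissible_card_at[Tb sumT]; apply: subadmissible_card_at => [n nv|].
  rewrite card_at_lsplit //; move: (Tb n).
  by rewrite nth_cat skv nv size_cat ltn_addr //; apply.
by rewrite -sumT sum_card_at_split leq_addr.
Qed.

Lemma subadmissible_rsplit (k l : seq nat) t T :
  size k = size v -> admissible (k ++ l) t T -> subadmissible l t (settuple_rsplit T).
Proof.
move=> skv /admissible_card_at[Tb sumT]; apply: subadmissible_card_at => [n nw|].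
  have vn_ge : (size v + n < size v) = false by rewrite ltnNge leq_addr.
  rewrite card_at_rsplit //; move: (Tb (size v + n)).
  by rewrite nth_cat skv vn_ge addKn size_cat ltn_add2l nw; apply.
by rewrite -sumT sum_card_at_split leq_addl.
Qed.

Lemma contained_in_cat T B1 B2 :
  contained_in (settuple_lsplit T) B1 -> contained_in (settuple_rsplit T) B2 ->
  contained_in T (settuple_cat B1 B2).
Proof.
move=> /contained_inP TB1 /contained_inP TB2; apply/contained_inP => n m Tnm.
have /andP[nvw mvw] := settuple_mem_bound Tnm.
rewrite settuple_ofE nvw mvw /=; move: mvw; rewrite nth_cat; case: ifP => nv mvw.
  by apply: TB1; rewrite settuple_ofE nv mvw.
have vn : size v <= n by rewrite leqNgt nv.
by apply: TB2; rewrite settuple_ofE subnKC // Tnm mvw ltn_subn_size_cat ?nv.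
Qed.

Lemma is_block_cat (k l : seq nat) B1 B2 : size k = size v ->
  is_block k B1 -> is_block l B2 -> is_block (k ++ l) (settuple_cat B1 B2).
Proof.
move=> skv /is_blockP B1k /is_blockP B2l; apply/is_blockP => n nvw.
rewrite card_at_cat // nth_cat skv; case: ifP => nv; first exact: B1k.
by apply: B2l; rewrite ltn_subn_size_cat ?nv.
Qed.

End Concatenation.

Theorem theorem6p1 (v k w l : seq nat) (t : nat)
    (D1 : seq (settuple v)) (D2 : seq (settuple w)) :
  size k = size v -> size l = size w ->
  all (fun x => 0 < x) v -> all (fun x => 0 < x) k ->
  all (fun x => 0 < x) w -> all (fun x => 0 < x) l ->
  all2 leq k v -> all2 leq l w -> 0 < t ->
  is_GC k t D1 -> is_GC l t D2 ->
  exists D : seq (settuple (v ++ w)),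
    is_GC (k ++ l) t D /\ size D = size D1 * size D2.
Proof.
move=> skv slw v_pos k_pos w_pos l_pos kv lw _ [/and4P[_ _ _ tk] D1k D1cov].
case=> /and4P[_ _ _ tl] D2l D2cov.
exists [seq settuple_cat B1 B2 | B1 <- D1, B2 <- D2]; split; last exact: size_allpairs.
split.
- rewrite !all_cat v_pos w_pos k_pos l_pos all2_cat // kv lw sumn_cat.
  by rewrite (leq_trans tk) ?leq_addr.
- rewrite all_allpairs; apply: sub_all D1k => B1 B1k; apply: sub_all D2l => B2 B2l.
  exact: is_block_cat.
move=> T admT.
have [T1 adm1 TT1] := subadmissible_extend skv kv tk (subadmissible_lsplit skv admT).
have [T2 adm2 TT2] := subadmissible_extend slw lw tl (subadmissible_rsplit skv admT).
rewrite has_allpairs; apply: sub_has (D1cov T1 adm1) => B1 T1B1.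
apply: sub_has (D2cov T2 adm2) => B2 T2B2.
exact: contained_in_cat (contained_in_trans TT1 T1B1) (contained_in_trans TT2 T2B2).
Qed.
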